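(* Let $(G_n)$ be a sequence of finite connected $d$-regular graphs ($d\geq3$) that is asymptotically embeddable into Hilbert space, and let $X$ be the associated coarse model space. Then $X$ has the boundary Haagerup property.
   Context: Graphs are undirected with no loops or parallel edges; $d_G$ is the edge metric. The coarse model space $X$ associated to $(G_n)$ with vertex sets $V_n$ is $\bigsqcup_n V_n$ with the metric equal to $d_{G_n}$ on each $V_n$ and $\infty$ between distinct $V_n$. $(G_n)$ is asymptotically embeddable into Hilbert space if there exist non-decreasing $\rho_-,\rho_+:\mathbb{R}_+\to\mathbb{R}_+$ tending to infinity, kernels $K_n:V_n\times V_n\to\mathbb{R}_+$ and $R_n\ge0$ with $R_n\to\infty$ such that $K_n$ is symmetric with $K_n(x,x)=0$, $\rho_-(d_{G_n}(x,y))\le K_n(x,y)\le\rho_+(d_{G_n}(x,y))$, and $\sum_{i,j}z_i\overline{z_j}K_n(x_i,x_j)\le0$ for every $\{x_1,\dots,x_m\}\subseteq V_n$ of diameter at most $R_n$ and $z_i\in\mathbb{C}$ with $\sum z_i=0$. Let $\beta X$ be the Stone–Čech compactification of $X$ (as a discrete space) and $\partial X=\beta X\setminus X$. For $r>0$ let $E_r=\{(x,y)\in X\times X: d(x,y)\le r\}$, $\overline{E_r}$ its closure in $\beta X\times\beta X$, and $F_r=\overline{E_r}\cap(\partial X\times\partial X)$. Let $G_\infty(X)=\bigcup_{r\in\mathbb{N}}F_r$ with the topology in which $U$ is open iff $U\cap F_r$ is open in $F_r$ for all $r$. $X$ has the boundary Haagerup property if there is a continuous proper function $h:G_\infty(X)\to\mathbb{R}_+$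 with $h(\omega,\omega)=0$ for $\omega\in\partial X$, $h(\omega,\eta)=h(\eta,\omega)$, and $\sum_{i,j}z_i\overline{z_j}h(\omega_i,\omega_j)\le0$ for every finite $\{\omega_1,\dots,\omega_m\}\subseteq\partial X$ with all $(\omega_i,\omega_j)\in G_\infty(X)$ and $z_i\in\mathbb{C}$ with $\sum z_i=0$. *)

From HB Require Import structures.
From mathcomp Require Import all_boot all_order all_algebra.
From mathcomp Require Import all_classical all_reals all_analysis.
From mathcomp Require Import Rstruct Rstruct_topology.
From mathcomp Require Import complex.
Import ComplexField.

Set Implicit Arguments.
Unset Strict Implicit.
Unset Printing Implicit Defensive.
Import Order.TTheory GRing.Theory Num.Theory.
Local Open Scope classical_set_scope.
Local Open Scope ring_scope.

Notation RR := Rdefinitions.R.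

Section Graphs.
Variables (V : finType) (adj : rel V).

Definition simple_graph : Prop := symmetric adj /\ irreflexive adj.

Definition regular_graph (d : nat) : Prop :=
  forall v : V, #|[set w | adj v w]| = d.

(* connected (and, by convention, nonempty) *)
Definition connected_graph : Prop :=
  (0 < #|V|)%N /\ forall x y : V, connect adj x y.

Definition walk (x y : V) (k : nat) : Prop :=
  exists p : seq V, [/\ path adj x p, last x p = y & size p = k].

Lemma walk_exb (x y : V) :
  (exists k, walk x y k) -> exists k, (fun k => `[< walk x y k >]) k.
Proof. by case=> k h; exists k; apply/asboolP. Qed.

(* edge metric d_G: length of a shortest walk (0 if none exists; never
   used for connected graphs) *)
Definition gdist (x y : V) : nat :=
  match pselect (exists k, walk x y k) with
  | left H => ex_minn (walk_exb H)
  | right _ => 0%N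
  end.

End Graphs.

Section CoarseSpace.
Variables (V : nat -> finType) (adj : forall n, rel (V n)).

Definition nondecr_to_infty (rho : RR -> RR) : Prop :=
  [/\ (forall t, 0 <= t -> 0 <= rho t),
      (forall s t, 0 <= s -> s <= t -> rho s <= rho t)
    & (forall M : RR, exists T : RR, forall t, T <= t -> M <= rho t)].

Definition asymp_embeddable : Prop :=
  exists (rhom rhop : RR -> RR) (K : forall n, V n -> V n -> RR)
         (Rn : nat -> RR),
  nondecr_to_infty rhom /\ nondecr_to_infty rhop /\
  (forall n, 0 <= Rn n) /\
  (forall M : RR, exists N, forall n, (N <= n)%N -> M <= Rn n) /\
  (forall n (x y : V n), 0 <= K n x y /\ K n x y = K n y x) /\
  (forall n (x : V n), K n x x = 0) /\
  (forall n (x y : V n),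
      rhom (gdist (@adj n) x y)%:R <= K n x y /\
      K n x y <= rhop (gdist (@adj n) x y)%:R) /\
  (forall n (m : nat) (x : 'I_m -> V n) (z : 'I_m -> complex RR),
      injective x ->
      (forall i j, (gdist (@adj n) (x i) (x j))%:R <= Rn n) ->
      \sum_(i < m) z i = 0 ->
      \sum_(i < m) \sum_(j < m)
          z i * conjc (z j) * real_complex RR (K n (x i) (x j)) <= 0).

(* the coarse model space X = disjoint union of the V n *)
Definition cspace : Type := {n : nat & V n}.

(* E_r = {(x,y) : d(x,y) <= r}; points of distinct components are at
   distance infinity *)
Definition Er (r : nat) : set (cspace * cspace) :=
  fun ab => exists n (x y : V n),
    [/\ ab.1 = existT _ n x, ab.2 = existT _ n y & (gdist (@adj n) x y <= r)%N].

(* Stone-Cech compactification beta X of the discrete space X: the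
   ultrafilters on X, with basic open sets [set w | w A], A : set X.
   X embeds in beta X via principal ultrafilters. *)
Definition ultrafilter (w : set_system cspace) : Prop :=
  inhabited (UltraFilter w).

Definition boundary (w : set_system cspace) : Prop :=
  ultrafilter w /\ forall x : cspace, w <> principal_filter x.

Definition pt := (set_system cspace * set_system cspace)%type.

(* closure in beta X x beta X (product topology, basis of products of
   basic open sets) of a set S of points *)
Definition bclosure (S : set pt) : set pt :=
  fun p => ultrafilter p.1 /\ ultrafilter p.2 /\
    forall A B : set cspace, p.1 A -> p.2 B ->
      exists q, [/\ S q, q.1 A & q.2 B].

Definition Er_beta (r : nat) : set pt :=
  [set (principal_filter ab.1, principal_filter ab.2) | ab in Er r].

Definition Fr (r : nat) : set pt :=
  fun p => bclosure (Er_beta r) p /\ boundary p.1 /\ boundary p.2.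

Definition Ginf : set pt := \bigcup_(r in [set: nat]) Fr r.

Definition rel_open (Y U : set pt) : Prop :=
  U `<=` Y /\
  forall p, U p -> exists A B : set cspace,
    [/\ p.1 A, p.2 B & forall q, Y q -> q.1 A -> q.2 B -> U q].

(* the inductive limit topology on G_oo(X) *)
Definition Ginf_open (U : set pt) : Prop :=
  U `<=` Ginf /\ forall r : nat, rel_open (Fr r) (U `&` Fr r).

Definition Ginf_compact (S : set pt) : Prop :=
  S `<=` Ginf /\
  forall (I : Type) (U : I -> set pt),
    (forall i, Ginf_open (U i)) -> S `<=` \bigcup_(i in [set: I]) U i ->
    exists s : seq I, S `<=` \bigcup_(i in [set i | List.In i s]) U i.

Definition Ginf_continuous (h : pt -> RR) : Prop :=
  forall O : set RR, open O -> Ginf_open (Ginf `&` h @^-1` O).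

Definition Ginf_proper (h : pt -> RR) : Prop :=
  forall C : set RR, compact C -> Ginf_compact (Ginf `&` h @^-1` C).

Definition boundary_haagerup : Prop :=
  exists h : pt -> RR,
  (forall p, Ginf p -> 0 <= h p) /\
  Ginf_continuous h /\
  Ginf_proper h /\
  (forall w, boundary w -> h (w, w) = 0) /\
  (forall w e, Ginf (w, e) -> h (w, e) = h (e, w)) /\
  (forall (m : nat) (om : 'I_m -> set_system cspace)
          (z : 'I_m -> complex RR),
      injective om ->
      (forall i, boundary (om i)) ->
      (forall i j, Ginf (om i, om j)) ->
      \sum_(i < m) z i = 0 ->
      \sum_(i < m) \sum_(j < m)
          z i * conjc (z j) * real_complex RR (h (om i, om j)) <= 0).

End CoarseSpace.

(** The kernel is h(om, push w om) = lim_(a -> om) K(a, w.a), where w.a follows the word w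
    of neighbour labels from a.  In a d-regular graph the points of F_r are exactly the
    pairs (om, push w om) with |w| = r, and h is well defined because two words pushing om
    to the same ultrafilter agree om-almost everywhere: otherwise a colouring giving
    distinct colours to points at distance <= |w1| + |w2| (finitely many colours suffice
    by bounded degree) would separate the two pushes.  Symmetry, vanishing on the diagonal
    and conditional negative definiteness pass from K to the ultralimit; for the last one,
    finitely many boundary points are pushes of a single one, and far out in the sequence
    their representatives are distinct and R_n-close.  Continuity holds because near a
    point of F_r the same word still works, and properness because h <= M bounds the word
    length through rho_-, leaving finitely many closed, hence compact, pieces of the
    Stone-Cech boundary. *)

From mathcomp Require Import all_boot all_order all_algebra.
From mathcomp Require Import all_classical all_reals all_analysis.
From mathcomp Require Import Rstruct Rstruct_topology complex.
From mathcomp Require Import ring lra.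
Import ComplexField.
Set Implicit Arguments.
Unset Strict Implicit.
Unset Printing Implicit Defensive.
Import Order.TTheory GRing.Theory Num.Theory.
Local Open Scope classical_set_scope.
Local Open Scope ring_scope.

Section Walks.
Variables (T : finType) (e : rel T).

(* [nbr i x] is x itself when i is at least the degree of x. *)
Definition nbr (i : nat) (x : T) : T := nth x (enum [set y | e x y]) i.

Fixpoint follow (w : seq nat) (x : T) : T :=
  if w is i :: w' then follow w' (nbr i x) else x.

Lemma follow_cat w1 w2 x : follow (w1 ++ w2) x = follow w2 (follow w1 x).
Proof. by elim: w1 x => //= i w IH x; rewrite IH. Qed.

Lemma nbr_adj i x : nbr i x != x -> e x (nbr i x).
Proof.
rewrite /nbr => nx.
have lt_i : (i < size (enum [set y | e x y]))%N.
  by rewrite ltnNge; apply: contra nx => le_i; rewrite nth_default.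
by have := mem_nth x lt_i; rewrite mem_enum inE.
Qed.

Lemma gdist_le x y k : walk e x y k -> (gdist e x y <= k)%N.
Proof.
move=> wk; rewrite /gdist; case: pselect => [H|]; last by case; exists k.
by case: ex_minnP => m _; apply; apply/asboolP.
Qed.

Lemma walk_gdist x y : (exists k, walk e x y k) -> walk e x y (gdist e x y).
Proof. by move=> H; rewrite /gdist; case: pselect => // {}H; case: ex_minnP => m /asboolP. Qed.

Lemma gdist_follow w x : (gdist e x (follow w x) <= size w)%N.
Proof.
suff [k [/gdist_le le_k le_kw]] : exists k, walk e x (follow w x) k /\ (k <= size w)%N.
  exact: leq_trans le_k le_kw.
elim: w x => [|i w IH] x /=; first by exists 0%N; split => //; exists [::].
have [k [[p [px pl sp]] le_kw]] := IH (nbr i x).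
have [ix|nix] := eqVneq (nbr i x) x.
  by exists k; split; [rewrite -{1}ix; exists p|exact: leqW].
exists k.+1; split => //; exists (nbr i x :: p).
by rewrite /= nbr_adj // px pl sp.
Qed.

Variable d : nat.
Hypothesis e_regular : forall x : T, #|[set y | e x y]| = d.

Lemma follow_nseq k x : follow (nseq k d) x = x.
Proof.
elim: k x => //= k IH x.
by rewrite /nbr nth_default ?IH // -cardE e_regular.
Qed.

Lemma path_follow x p : path e x p ->
  exists w : seq nat, [/\ size w = size p, all (fun i => i < d)%N w & follow w x = last x p].
Proof.
elim: p x => [|y p IH] x /=; first by exists [::].
case/andP=> exy /IH [w [sw dw fw]].
have yN : y \in enum [set z | e x z] by rewrite mem_enum inE.
exists (index y (enum [set z | e x z]) :: w); split => /=; first by rewrite sw.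
  by rewrite dw andbT -(e_regular x) cardE index_mem.
by rewrite /nbr nth_index.
Qed.

Hypothesis e_sym : symmetric e.
Hypothesis e_connect : forall x y : T, connect e x y.

Lemma walk_exists x y : exists k, walk e x y k.
Proof. by have /connectP [p px py] := e_connect x y; exists (size p), p. Qed.

Lemma follow_tuple r x y : (gdist e x y <= r)%N ->
  exists t : r.-tuple 'I_d.+1, follow (map val t) x = y.
Proof.
have [p [px <- sp]] := walk_gdist (walk_exists x y).
move=> le_pr; have [w [sw dw <-]] := path_follow px.
set s : seq 'I_d.+1 := map inord w ++ nseq (r - size w) ord_max.
have /eqP ss : size s = r by rewrite size_cat size_nseq size_map subnKC // sw sp.
exists (Tuple ss); rewrite /= map_cat -map_comp map_nseq follow_cat follow_nseq.
congr follow; rewrite -[RHS]map_id; apply/eq_in_map => i /(allP dw) lt_id /=.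
by rewrite inordK // ltnW.
Qed.

Lemma walk_rev x y k : walk e x y k -> walk e y x k.
Proof.
case=> p [px py sp]; exists (rev (belast x p)); split.
- rewrite -py rev_path; congr (path _ x p): px.
  by apply/funext => a; apply/funext => b; rewrite /= e_sym.
- by rewrite -py; case: (p) => //= a q; rewrite rev_cons last_rcons.
- by rewrite size_rev size_belast.
Qed.

Lemma gdist_sym x y : gdist e x y = gdist e y x.
Proof.
by apply/eqP; rewrite eqn_leq; apply/andP; split; apply/gdist_le/walk_rev/walk_gdist/walk_exists.
Qed.

Lemma gdist_triangle x y z : (gdist e x z <= gdist e x y + gdist e y z)%N.
Proof.
have [p [px py sp]] := walk_gdist (walk_exists x y).
have [q [qy qz sq]] := walk_gdist (walk_exists y z).
apply: gdist_le; exists (p ++ q).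
by rewrite cat_path px py qy last_cat py qz size_cat sp sq.
Qed.

Lemma gdist_follow2 w1 w2 x :
  (gdist e (follow w1 x) (follow w2 x) <= size w1 + size w2)%N.
Proof.
apply: leq_trans (gdist_triangle _ x _) _.
by rewrite gdist_sym; apply: leq_add; apply: gdist_follow.
Qed.

Definition nearby (R : nat) : rel T := fun x y => (x != y) && (gdist e x y <= R)%N.

Lemma nearby_sym R : symmetric (nearby R).
Proof. by move=> x y; rewrite /nearby eq_sym gdist_sym. Qed.

Lemma card_nearby R x : (#|[set y | nearby R x y]%SET| <= #|{: R.-tuple 'I_d.+1}|)%N.
Proof.
pose f (t : R.-tuple 'I_d.+1) := follow (map val t) x.
rewrite -cardsT; apply: (leq_trans _ (leq_imset_card f _)).
apply: subset_leq_card; apply/fintype.subsetP => y; rewrite inE => /andP[_ /follow_tuple [t ft]].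
by apply/imsetP; exists t; rewrite ?inE.
Qed.

End Walks.

Lemma greedy_coloring (T : finType) (e : rel T) (D : nat) :
  symmetric e -> irreflexive e -> (forall x, #|[set y | e x y]%SET| <= D)%N ->
  exists c : T -> 'I_D.+1, forall x y, e x y -> c x != c y.
Proof.
move=> e_sym e_irr e_deg.
suff [c cP] : exists c : T -> 'I_D.+1,
    forall x y, x \in enum T -> y \in enum T -> e x y -> c x != c y.
  by exists c => x y; apply: cP; rewrite mem_enum.
elim: (enum T) => [|x s [c cP]]; first by exists (fun _ => ord0).
have [k _ kN] : exists2 k, k \in [set: 'I_D.+1]%SET & k \notin (c @: [set y | e x y])%SET.
  apply/fintype.subsetPn/negP => /subset_leq_card; rewrite cardsT card_ord => le_D.
  by have := leq_trans le_D (leq_imset_card _ _); rewrite ltnNge e_deg.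
have kx z : e x z -> k != c z.
  by move=> exz; apply: contraNneq kN => ->; apply/imsetP; exists z; rewrite ?inE.
exists (fun y => if y == x then k else c y) => y z; rewrite !inE.
case: (eqVneq y x) => [->|yx]; case: (eqVneq z x) => [->|zx] //=.
- by rewrite e_irr.
- by move=> _ _; apply: kx.
- by move=> _ _; rewrite e_sym eq_sym => /kx.
- exact: cP.
Qed.

Section Ultrafilters.
Variable T : Type.

Definition is_ultra (w : set_system T) : Prop :=
  [/\ w setT, ~ w set0, (forall A B, w A -> w B -> w (A `&` B)),
      (forall A B, A `<=` B -> w A -> w B) & (forall A, w A \/ w (~` A))].

Variable w : set_system T.
Hypothesis w_ultra : is_ultra w.

Lemma ultraT : w setT. Proof. by case: w_ultra. Qed.
Lemma ultra_neq0 : ~ w set0. Proof. by case: w_ultra. Qed.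
Lemma ultraI A B : w A -> w B -> w (A `&` B). Proof. by case: w_ultra => _ _ + _ _; apply. Qed.
Lemma ultraS A B : A `<=` B -> w A -> w B. Proof. by case: w_ultra => _ _ _ + _; apply. Qed.

Lemma ultra_inhabited A : w A -> exists a, A a.
Proof.
move=> wA; apply: contrapT => nA; apply: ultra_neq0.
by apply: ultraS wA => a Aa; apply: nA; exists a.
Qed.

Lemma ultra_setC A : w (~` A) <-> ~ w A.
Proof.
split; first by move=> wC wA; have [a []] := ultra_inhabited (ultraI wA wC).
by case: w_ultra => _ _ _ _ /(_ A) [].
Qed.

Lemma ultra_forall (I : finType) (P : I -> set T) :
  (forall i, w (P i)) -> w (fun a => forall i, P i a).
Proof.
have w_filter : Filter w by split; [exact: ultraT|exact: ultraI|exact: ultraS].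
exact: filter_forall.
Qed.

Lemma ultra_exists (I : finType) (P : I -> set T) :
  w (fun a => exists i, P i a) -> exists i, w (P i).
Proof.
move=> wP; apply: contrapT => nP.
have wC i : w (~` P i) by apply/ultra_setC => wPi; apply: nP; exists i.
by have [a [[i Pia] /(_ i)]] := ultra_inhabited (ultraI wP (ultra_forall wC)).
Qed.

Lemma ultra_UltraFilter : UltraFilter w.
Proof.
split; first by split; [exact: ultra_neq0|split; [exact: ultraT|exact: ultraI|exact: ultraS]].
move=> G G_filter wG; apply/funext => A; apply/propext; split; last exact: wG.
move=> GA; apply: contrapT => nA; have GC := wG _ ((ultra_setC A).2 nA).
by have := @filterI _ G G_filter _ _ GA GC; rewrite setICr; apply: filter_not_empty.
Qed.

End Ultrafilters.
Arguments ultraI {T w} w_ultra {A B}.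
Arguments ultraS {T w} w_ultra {A B}.
Arguments ultra_inhabited {T w} w_ultra {A}.
Arguments ultra_setC {T w} w_ultra A.
Arguments ultra_forall {T w} w_ultra {I P}.
Arguments ultra_exists {T w} w_ultra {I P}.

Lemma UltraFilter_ultra T (w : set_system T) : UltraFilter w -> is_ultra w.
Proof.
move=> w_ultra; split; [exact: filterT|exact: filter_not_empty|exact: filterI|exact: filterS|].
by move=> A; apply: in_ultra_setVsetC.
Qed.

Lemma ultra_eq T (w1 w2 : set_system T) : is_ultra w1 -> is_ultra w2 ->
  (forall B, w1 B -> w2 B) -> w1 = w2.
Proof.
move=> u1 u2 le12; apply/funext => B; apply/propext; split; first exact: le12.
by move=> w2B; apply: contrapT => /(ultra_setC u1) /le12 /(ultra_setC u2).
Qed.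

Lemma ultra_neq T (w1 w2 : set_system T) : is_ultra w1 -> is_ultra w2 -> w1 <> w2 ->
  exists B, w1 B /\ ~ w2 B.
Proof.
move=> u1 u2 w12; apply: contrapT => nB; apply: w12; apply: ultra_eq => // B w1B.
by apply: contrapT => nw2B; apply: nB; exists B.
Qed.

Lemma ultra_finite_subcover T (S : set (set_system T)) (I : Type) (D : I -> set T) :
  (forall om, S om -> is_ultra om) ->
  (forall G, is_ultra G -> (forall A, G A -> exists om, S om /\ om A) -> S G) ->
  (forall om, S om -> exists i, om (D i)) ->
  exists s : seq I, forall om, S om -> exists i, List.In i s /\ om (D i).
Proof.
move=> S_ultra S_closed S_cover; apply: contrapT => no_sub.
pose F : set_system T := fun A => exists s : seq I,
  forall om, S om -> (forall i, List.In i s -> ~ om (D i)) -> om A.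
have F_proper : ProperFilter F.
  split.
  - case=> s Fs; apply: no_sub; exists s => om Som; apply: contrapT => nD.
    by apply: (ultra_neq0 (S_ultra _ Som)); apply: Fs => // i si omD; apply: nD; exists i.
  split.
  - by exists [::] => om Som _; apply: (ultraT (S_ultra _ Som)).
  - move=> A B [s1 F1] [s2 F2]; exists (s1 ++ s2)%list => om Som nD.
    by apply: (ultraI (S_ultra _ Som)); [apply: F1|apply: F2] => // i si;
      apply: nD; apply: List.in_or_app; [left|right].
  - move=> A B AB [s Fs]; exists s => om Som nD.
    exact: (ultraS (S_ultra _ Som) AB (Fs om Som nD)).
have [G [/UltraFilter_ultra G_ultra FG]] := ultraFilterLemma F_proper.
have SG : S G.
  apply: S_closed => // A GA; apply: contrapT => nA.
  have : F (~` A).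
    by exists [::] => om Som _; apply/(ultra_setC (S_ultra _ Som)) => omA; apply: nA; exists om.
  by move/FG/(ultra_setC G_ultra).
have [i GDi] := S_cover G SG.
have : F (~` D i).
  by exists [:: i] => om Som nD; apply/(ultra_setC (S_ultra _ Som)); apply: nD; left.
by move/FG/(ultra_setC G_ultra).
Qed.

Section Ultralimits.
Variable T : Type.
Implicit Types (w : set_system T) (u v : T -> RR).

Definition ulim_to w u (L : RR) : Prop :=
  forall eps : RR, 0 < eps -> w [set a | `|u a - L| < eps].

Variable w : set_system T.
Hypothesis w_ultra : is_ultra w.

Lemma ulim_to_eq u v L : w [set a | u a = v a] -> ulim_to w u L -> ulim_to w v L.
Proof.
move=> uv uL eps eps_gt0.
by apply: (ultraS w_ultra _ (ultraI w_ultra uv (uL eps eps_gt0))) => a /= [<-].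
Qed.

Lemma ulim_to_cst c : ulim_to w (fun _ => c) c.
Proof.
move=> eps eps_gt0; apply: (ultraS w_ultra _ (ultraT w_ultra)) => a _ /=.
by rewrite subrr normr0.
Qed.

Lemma ulim_to_ge u L c : w [set a | c <= u a] -> ulim_to w u L -> c <= L.
Proof.
move=> cu uL; rewrite leNgt; apply/negP => Lc.
have cL_gt0 : 0 < c - L by rewrite subr_gt0.
have [a [/= ca]] := ultra_inhabited w_ultra (ultraI w_ultra cu (uL _ cL_gt0)).
by rewrite ltr_distl => /andP[_]; lra.
Qed.

Lemma ulim_to_le u L c : w [set a | u a <= c] -> ulim_to w u L -> L <= c.
Proof.
move=> uc uL; rewrite leNgt; apply/negP => cL.
have Lc_gt0 : 0 < L - c by rewrite subr_gt0.
have [a [/= ac]] := ultra_inhabited w_ultra (ultraI w_ultra uc (uL _ Lc_gt0)).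
by rewrite ltr_distl => /andP[+ _]; lra.
Qed.

Lemma ulim_to_unique u L1 L2 : ulim_to w u L1 -> ulim_to w u L2 -> L1 = L2.
Proof.
move=> uL1 uL2; apply: contrapT => /eqP L12.
have gt0 : 0 < `|L1 - L2| / 2 by rewrite divr_gt0 // normr_gt0 subr_eq0.
have [a [/=]] := ultra_inhabited w_ultra (ultraI w_ultra (uL1 _ gt0) (uL2 _ gt0)).
rewrite !ltr_distl => /andP[h1 h2] /andP[h3 h4].
by case: (lerP 0 (L1 - L2)) => [/ger0_norm|/ltr0_norm] E; rewrite E in gt0 h1 h2 h3 h4; lra.
Qed.

Lemma ulim_to_exists u (M : RR) : (forall a, 0 <= u a <= M) -> exists L, ulim_to w u L.
Proof.
move=> u_bnd; set S := [set c | w [set a | c <= u a]].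
have S_sup : has_sup S.
  split; first exists 0.
    by apply: (ultraS w_ultra _ (ultraT w_ultra)) => a _ /=; case/andP: (u_bnd a).
  exists M => c Sc; have [a /= cu] := ultra_inhabited w_ultra Sc.
  by case/andP: (u_bnd a) => _; apply: le_trans.
exists (sup S) => eps eps_gt0.
have [c Sc lt_c] := sup_adherent eps_gt0 S_sup.
have w_lt : w [set a | u a < sup S + eps].
  apply: contrapT => /(ultra_setC w_ultra) w_ge.
  have : S (sup S + eps) by apply: (ultraS w_ultra _ w_ge) => a /= /negP; rewrite -leNgt.
  by move/(sup_upper_bound S_sup); lra.
apply: (ultraS w_ultra _ (ultraI w_ultra Sc w_lt)) => a /= [cu ua].
by rewrite ltr_distl ua andbT; apply: lt_le_trans lt_c cu.
Qed.

End Ultralimits.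

Definition ulim T (w : set_system T) (u : T -> RR) : RR :=
  match pselect (exists L, ulim_to w u L) with
  | left H => projT1 (cid H)
  | right _ => 0
  end.

Lemma ulimP T (w : set_system T) u : (exists L, ulim_to w u L) -> ulim_to w u (ulim w u).
Proof. by rewrite /ulim; case: pselect => // H _; case: (cid H). Qed.

Lemma Re_sum (I : Type) (r : seq I) (F : I -> complex RR) :
  complex.Re (\sum_(i <- r) F i) = \sum_(i <- r) complex.Re (F i).
Proof.
elim: r => [|i r IH]; rewrite ?big_nil // !big_cons -IH.
by case: (F i); case: (\sum_(j <- r) F j).
Qed.

Lemma Im_sum (I : Type) (r : seq I) (F : I -> complex RR) :
  complex.Im (\sum_(i <- r) F i) = \sum_(i <- r) complex.Im (F i).
Proof.
elim: r => [|i r IH]; rewrite ?big_nil // !big_cons -IH.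
by case: (F i); case: (\sum_(j <- r) F j).
Qed.

Section KernelForms.
Variable m : nat.
Implicit Types (z : 'I_m -> complex RR) (H c : 'I_m -> 'I_m -> RR).

Definition cform z H : complex RR :=
  \sum_(i < m) \sum_(j < m) z i * conjc (z j) * real_complex RR (H i j).

Lemma Re_cform z H :
  complex.Re (cform z H) = \sum_(i < m) \sum_(j < m) H i j * complex.Re (z i * conjc (z j)).
Proof.
rewrite Re_sum; apply: eq_bigr => i _; rewrite Re_sum; apply: eq_bigr => j _.
by case: (z i * conjc (z j)) => a b /=; ring.
Qed.

Lemma Im_cform z H : (forall i j, H i j = H j i) -> complex.Im (cform z H) = 0.
Proof.
move=> H_sym; rewrite Im_sum; under eq_bigr do rewrite Im_sum.
set S := \sum_(i < m) _; suff : S = - S by lra.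
rewrite {1}/S exchange_big -sumrN; apply: eq_bigr => i _; rewrite -sumrN; apply: eq_bigr => j _.
by rewrite H_sym; case: (z i) => a b; case: (z j) => a' b' /=; ring.
Qed.

Lemma cform_le0E z H : (forall i j, H i j = H j i) ->
  (cform z H <= 0) = (\sum_(i < m) \sum_(j < m) H i j * complex.Re (z i * conjc (z j)) <= 0).
Proof. by move=> H_sym; rewrite lecE Im_cform // eqxx Re_cform. Qed.

Lemma form_le0_approx c H :
  (forall eps, 0 < eps -> exists2 K : 'I_m -> 'I_m -> RR,
     (forall i j, `|K i j - H i j| < eps) & \sum_(i < m) \sum_(j < m) K i j * c i j <= 0) ->
  \sum_(i < m) \sum_(j < m) H i j * c i j <= 0.
Proof.
move=> approx; rewrite leNgt; apply/negP => S_gt0.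
set S := \sum_(i < m) _ in S_gt0; set P := \sum_(i < m) \sum_(j < m) `|c i j|.
have P_ge0 : 0 <= P by apply: sumr_ge0 => i _; apply: sumr_ge0 => j _.
have [|K KH K_le0] := approx (S / (P + 1)); first by rewrite divr_gt0 //; lra.
have : S - \sum_(i < m) \sum_(j < m) K i j * c i j <= S / (P + 1) * P.
  rewrite {1}/S -sumrB mulr_sumr; apply: ler_sum => i _.
  rewrite -sumrB mulr_sumr; apply: ler_sum => j _.
  rewrite -mulrBl; apply: le_trans (ler_norm _) _; rewrite normrM distrC.
  by apply: ler_wpM2r => //; apply: ltW.
have : S / (P + 1) * P < S.
  by rewrite mulrAC ltr_pdivrMr ?ltr_pM2l; lra.
lra.
Qed.

End KernelForms.

Section CoarseSpace.
Variables (V : nat -> finType) (adj : forall n, rel (V n)) (d : nat).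
Hypothesis adj_sym : forall n, symmetric (@adj n).
Hypothesis adj_connect : forall n (x y : V n), connect (@adj n) x y.
Hypothesis adj_regular : forall n (x : V n), #|[set y | adj x y]| = d.

Local Notation X := (cspace V).

Definition followV (w : seq nat) (a : X) : V (tag a) := follow (@adj (tag a)) w (tagged a).
Definition followX (w : seq nat) (a : X) : X := existT _ (tag a) (followV w a).
Local Notation push w := (fmap (followX w)).

Definition agree (om : set_system X) (w1 w2 : seq nat) : Prop :=
  om [set a | followV w1 a = followV w2 a].

Definition free_ultra (om : set_system X) : Prop := is_ultra om /\ forall a : X, ~ om [set a].

Lemma push_ultra w om : is_ultra om -> is_ultra (push w om).
Proof.
move=> om_ultra; split.
- exact: (ultraT om_ultra).
- exact: (ultra_neq0 om_ultra).
- by move=> A B; apply: (ultraI om_ultra).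
- by move=> A B AB; apply: (ultraS om_ultra) => a /AB.
- by move=> A; case: (om_ultra) => _ _ _ _ /(_ (followX w @^-1` A)).
Qed.

Lemma push_cat w1 w2 om : push (w1 ++ w2) om = push w2 (push w1 om).
Proof.
by apply/funext => B /=; congr om; apply/funext => a; rewrite /followX /followV /= follow_cat.
Qed.

Lemma push_nil om : push [::] om = om.
Proof. by apply/funext => B /=; congr om; apply/funext; case. Qed.

Lemma push_agree w1 w2 om : is_ultra om -> agree om w1 w2 -> push w1 om = push w2 om.
Proof.
move=> om_ultra w12; apply: ultra_eq; try exact: push_ultra.
move=> B om1B; apply: (ultraS om_ultra _ (ultraI om_ultra w12 om1B)) => a /= [+ Ba].
by rewrite /followX => <-.
Qed.

Lemma nearby_coloring R : exists col : X -> 'I_#|{: R.-tuple 'I_d.+1}|.+1,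
  forall n (x y : V n), nearby (@adj n) R x y -> col (existT _ n x) != col (existT _ n y).
Proof.
have col_n n : exists c : V n -> 'I_#|{: R.-tuple 'I_d.+1}|.+1,
    forall x y, nearby (@adj n) R x y -> c x != c y.
  apply: greedy_coloring; first exact: nearby_sym.
  - by move=> x; rewrite /nearby eqxx.
  - exact: card_nearby.
exists (fun a => projT1 (cid (col_n (tag a))) (tagged a)) => n x y /=.
have := projT2 (cid (col_n n)); apply.
Qed.

Lemma agree_push w1 w2 om : is_ultra om -> push w1 om = push w2 om -> agree om w1 w2.
Proof.
(* Otherwise one pair of distinct colours is taken a.e. by the two endpoints, and the two
   pushes would contain disjoint colour classes. *)
move=> om_ultra push12; have [col colP] := nearby_coloring (size w1 + size w2).
apply: contrapT => /(ultra_setC om_ultra) disagree.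
have : om (fun a => exists ij, [/\ followV w1 a <> followV w2 a,
           col (followX w1 a) = ij.1 & col (followX w2 a) = ij.2]).
  by apply: (ultraS om_ultra _ disagree) => a ?; exists (col (followX w1 a), col (followX w2 a)).
case/(ultra_exists om_ultra) => -[i j] om_ij.
have neq_ij : i != j.
  have [a [neq_a /= <- <-]] := ultra_inhabited om_ultra om_ij.
  by apply: colP; rewrite /nearby (gdist_follow2 (@adj_sym _) (@adj_connect _)) andbT; apply/eqP.
have om1i : push w1 om [set b | col b = i] by apply: (ultraS om_ultra _ om_ij) => b [].
have om2j : push w2 om [set b | col b = j] by apply: (ultraS om_ultra _ om_ij) => b [].
rewrite push12 in om1i.
have om2_ultra := push_ultra w2 om_ultra.
have [b [/= bi bj]] := ultra_inhabited om2_ultra (ultraI om2_ultra om1i om2j).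
by move: neq_ij; rewrite -bi -bj eqxx.
Qed.

Lemma free_ultra_tag (om : set_system X) n : free_ultra om -> ~ om [set a | tag a = n].
Proof.
move=> [om_ultra om_free] om_n.
have : om (fun a => exists x : V n, [set existT _ n x] a).
  by apply: (ultraS om_ultra _ om_n) => -[m y] /= mn; subst m; exists y.
by case/(ultra_exists om_ultra) => x /om_free.
Qed.

Lemma free_ultra_tag_ge (om : set_system X) N : free_ultra om -> om [set a | (N <= tag a)%N].
Proof.
move=> om_free; have om_ultra := om_free.1.
apply: contrapT => /(ultra_setC om_ultra) om_lt.
have : om (fun a => exists k : 'I_N, [set a | tag a = val k] a).
  apply: (ultraS om_ultra _ om_lt) => a /negP; rewrite -ltnNge => lt_aN.
  by exists (Ordinal lt_aN).
by case/(ultra_exists om_ultra) => k /(free_ultra_tag om_free).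
Qed.

Lemma push_free_ultra w om : free_ultra om -> free_ultra (push w om).
Proof.
move=> om_free; split; first exact: push_ultra om_free.1.
move=> b om_b; apply: (free_ultra_tag (n := tag b) om_free).
by apply: (ultraS om_free.1 _ om_b) => a /= <-.
Qed.

Lemma boundaryE (om : set_system X) : boundary om <-> free_ultra om.
Proof.
split.
- move=> [[om_Ultra] om_np]; have om_ultra := UltraFilter_ultra om_Ultra.
  split => // a om_a; apply: (om_np a); apply/funext => A; apply/propext; split.
  + move=> om_A; apply/principal_filterP.
    by have [b [/= -> //]] := ultra_inhabited om_ultra (ultraI om_ultra om_a om_A).
  + by move/principal_filterP => Aa; apply: (ultraS om_ultra _ om_a) => b /= ->.
- move=> [om_ultra om_free]; split; first by constructor; apply: ultra_UltraFilter.
  by move=> a om_a; apply: (om_free a); rewrite om_a; apply/principal_filterP.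
Qed.

Lemma FrE r (p : pt V) : Fr adj r p <->
  [/\ free_ultra p.1, free_ultra p.2 & forall A B, p.1 A -> p.2 B -> exists n (x y : V n),
     [/\ A (existT _ n x), B (existT _ n y) & (gdist (@adj n) x y <= r)%N]].
Proof.
split.
- move=> [[_ [_ p_cl]] [/boundaryE p1_free /boundaryE p2_free]]; split => // A B p1A p2B.
  have [q [[ab [n [x [y [-> -> xy]]]] <-] /= /principal_filterP Ax /principal_filterP By]] :=
    p_cl A B p1A p2B.
  by exists n, x, y.
- move=> [p1_free p2_free p_cl]; split; last by split; apply/boundaryE.
  split; first by constructor; apply: ultra_UltraFilter p1_free.1.
  split; first by constructor; apply: ultra_UltraFilter p2_free.1.
  move=> A B p1A p2B; have [n [x [y [Ax By xy]]]] := p_cl A B p1A p2B.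
  exists (principal_filter (existT _ n x : X), principal_filter (existT _ n y : X)).
  split; [|exact/principal_filterP|exact/principal_filterP].
  by exists (existT _ n x, existT _ n y) => //; exists n, x, y.
Qed.

Lemma Fr_sym r om1 om2 : Fr adj r (om1, om2) -> Fr adj r (om2, om1).
Proof.
move=> /FrE [/= om1_free om2_free om_cl]; apply/FrE; split => //= A B om2A om1B.
have [n [x [y [Bx Ay xy]]]] := om_cl B A om1B om2A.
by exists n, y, x; rewrite gdist_sym.
Qed.

Lemma Fr_push w om : free_ultra om -> Fr adj (size w) (om, push w om).
Proof.
move=> om_free; apply/FrE; split => //=; first exact: push_free_ultra.
move=> A B omA omB; have [[n x] [/= Ax Bx]] := ultra_inhabited om_free.1 (ultraI om_free.1 omA omB).
by exists n, x, (follow (@adj n) w x); split => //; apply: gdist_follow.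
Qed.

Lemma Fr_push_tuple r (p : pt V) : Fr adj r p ->
  exists t : r.-tuple 'I_d.+1, p.2 = push (map val t) p.1.
Proof.
move=> /FrE [p1_free p2_free p_cl]; apply: contrapT => no_t.
have sep (t : r.-tuple 'I_d.+1) : exists B, p.2 B /\ ~ push (map val t) p.1 B.
  apply: ultra_neq p2_free.1 (push_ultra _ p1_free.1) _ => p2t.
  by apply: no_t; exists t.
have [B Bt] := choice sep.
have p1A : p.1 (fun a => forall t, ~ B t (followX (map val t) a)).
  by apply: (ultra_forall p1_free.1) => t; apply/(ultra_setC p1_free.1); exact: (Bt t).2.
have p2B : p.2 (fun b => forall t, B t b) by apply: (ultra_forall p2_free.1) => t; exact: (Bt t).1.
have [n [x [y [Ax By xy]]]] := p_cl _ _ p1A p2B.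
have [t xty] := follow_tuple (@adj_regular n) (@adj_connect n) xy.
by apply: (Ax t); rewrite /followX /followV /= xty.
Qed.

Lemma Ginf_push (p : pt V) : Ginf adj p ->
  [/\ free_ultra p.1, free_ultra p.2 & exists w, p.2 = push w p.1].
Proof.
case=> r _ p_r; have /FrE [p1_free p2_free _] := p_r; split => //.
by have [t ->] := Fr_push_tuple p_r; exists (map val t).
Qed.

Lemma Ginf_sym om1 om2 : Ginf adj (om1, om2) -> Ginf adj (om2, om1).
Proof. by case=> r _ /Fr_sym om_r; exists r. Qed.

Lemma push_word_nbhd r (p : pt V) u : Fr adj r p -> p.2 = push u p.1 ->
  exists A B, [/\ p.1 A, p.2 B & forall q, Fr adj r q -> q.1 A -> q.2 B -> q.2 = push u q.1].
Proof.
move=> p_r p2u; have /FrE [[p1_ultra _] [p2_ultra _] _] := p_r.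
have nbhd_t (t : r.-tuple 'I_d.+1) : exists AB : set X * set X,
    [/\ p.1 AB.1, p.2 AB.2 & forall om, is_ultra om -> om AB.1 ->
       push (map val t) om AB.2 -> agree om (map val t) u].
  have [tu|ntu] := pselect (push (map val t) p.1 = p.2).
    exists ([set a | followV (map val t) a = followV u a], setT); split => //.
    - by apply: agree_push; rewrite ?tu.
    - exact: (ultraT p2_ultra : p.2 setT).
  have [B [p2B ntB]] := ultra_neq p2_ultra (push_ultra (map val t) p1_ultra) (nesym ntu).
  exists (~` (followX (map val t) @^-1` B), B); split => //=.
  - exact/(ultra_setC p1_ultra).
  - by move=> om om_ultra /(ultra_setC om_ultra _).
have [AB ABt] := choice nbhd_t.
exists (fun a => forall t, (AB t).1 a), (fun b => forall t, (AB t).2 b); split.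
- by apply: (ultra_forall p1_ultra) => t; case: (ABt t).
- by apply: (ultra_forall p2_ultra) => t; case: (ABt t).
move=> q q_r q1A q2B; have /FrE [[q1_ultra _] [q2_ultra _] _] := q_r.
have [t q2t] := Fr_push_tuple q_r.
rewrite q2t; apply: push_agree => //; case: (ABt t) => _ _; apply => //.
- by apply: (ultraS q1_ultra _ q1A) => a /(_ t).
- by rewrite -q2t; apply: (ultraS q2_ultra _ q2B) => b /(_ t).
Qed.

Section Kernel.
Variables (rhom rhop : RR -> RR) (K : forall n, V n -> V n -> RR).
Hypothesis rhom_to_infty : nondecr_to_infty rhom.
Hypothesis rhop_to_infty : nondecr_to_infty rhop.
Hypothesis K_ge0_sym : forall n (x y : V n), 0 <= K x y /\ K x y = K y x.
Hypothesis K_diag : forall n (x : V n), K x x = 0.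
Hypothesis K_bounds : forall n (x y : V n),
  rhom (gdist (@adj n) x y)%:R <= K x y /\ K x y <= rhop (gdist (@adj n) x y)%:R.

Definition Kw (w : seq nat) (a : X) : RR := K (tagged a) (followV w a).

(* The choice of the word is irrelevant by [agree_push]; see [hker_ulim]. *)
Definition hker (p : pt V) : RR :=
  match pselect (exists w, p.2 = push w p.1) with
  | left H => ulim p.1 (Kw (projT1 (cid H)))
  | right _ => 0
  end.

Lemma Kw_bounds w a : 0 <= Kw w a <= rhop (size w)%:R.
Proof.
rewrite /Kw (K_ge0_sym (tagged a) (followV w a)).1 /=.
apply: le_trans (K_bounds _ _).2 _; case: rhop_to_infty => _ rhop_nd _.
by apply: rhop_nd => //; rewrite ler_nat gdist_follow.
Qed.

Lemma hker_ulim (p : pt V) w : is_ultra p.1 -> p.2 = push w p.1 -> ulim_to p.1 (Kw w) (hker p).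
Proof.
move=> p1_ultra p2w; rewrite /hker; case: pselect => [H|]; last by case; exists w.
case: (cid H) => w' p2w' /=.
have /ulimP := ulim_to_exists p1_ultra (Kw_bounds w'); apply: ulim_to_eq => //.
have := agree_push p1_ultra (etrans (esym p2w') p2w).
by apply: (ultraS p1_ultra) => a /=; rewrite /Kw => ->.
Qed.

Lemma hker_ge0 p : Ginf adj p -> 0 <= hker p.
Proof.
case/Ginf_push => [[p1_ultra _] _ [w p2w]].
apply: (ulim_to_ge p1_ultra _ (hker_ulim p1_ultra p2w)).
by apply: (ultraS p1_ultra _ (ultraT p1_ultra)) => a _ /=; case/andP: (Kw_bounds w a).
Qed.

Lemma hker_diag om : free_ultra om -> hker (om, om) = 0.
Proof.
move=> [om_ultra _]; have := hker_ulim (p := (om, om)) om_ultra (esym (push_nil om)).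
move/(ulim_to_unique om_ultra); apply; apply: ulim_to_eq (ulim_to_cst om_ultra 0) => //.
by apply: (ultraS om_ultra _ (ultraT om_ultra)) => a _ /=; rewrite /Kw K_diag.
Qed.

Lemma hker_sym om1 om2 : Ginf adj (om1, om2) -> hker (om1, om2) = hker (om2, om1).
Proof.
move=> om12; have [/= [om1_ultra _] [om2_ultra _] [u om2u]] := Ginf_push om12.
have [/= _ _ [v om1v]] := Ginf_push (Ginf_sym om12).
have h12 := hker_ulim (p := (om1, om2)) om1_ultra om2u.
have h21 : ulim_to om1 (fun a => Kw v (followX u a)) (hker (om2, om1)).
  by move=> eps /(hker_ulim (p := (om2, om1)) om2_ultra om1v) /=; rewrite {1}om2u; apply.
apply: (ulim_to_unique om1_ultra h12); apply: ulim_to_eq h21 => //.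
have uv_nil : push (u ++ v) om1 = push [::] om1 by rewrite push_cat -om2u -om1v push_nil.
have := agree_push om1_ultra uv_nil.
apply: (ultraS om1_ultra) => a /= uva.
by rewrite /Kw /followV /= -follow_cat; rewrite /followV in uva; rewrite uva (K_ge0_sym _ _).2.
Qed.

Lemma hker_continuous_Fr r (p : pt V) (O : set RR) : open O -> Fr adj r p -> O (hker p) ->
  exists A B, [/\ p.1 A, p.2 B & forall q, Fr adj r q -> q.1 A -> q.2 B -> O (hker q)].
Proof.
move=> O_open p_r Ohp; have /FrE [[p1_ultra _] _ _] := p_r.
have [t p2t] := Fr_push_tuple p_r; set u := map val t in p2t.
have [A [B [p1A p2B same_u]]] := push_word_nbhd p_r p2t.
have [eps eps_gt0 epsO] : exists2 eps : RR, 0 < eps & forall y, `|hker p - y| < eps -> O y.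
  have /nbhs_ballP [eps eps_gt0 ballO] : nbhs (hker p) O by apply: open_nbhs_nbhs.
  by exists eps => // y hy; apply: ballO.
have eps2_gt0 : 0 < eps / 2 by rewrite divr_gt0.
exists (A `&` [set a | `|Kw u a - hker p| < eps / 2]), B; split => //.
  by apply: (ultraI p1_ultra p1A); apply: (hker_ulim p1_ultra p2t).
move=> q q_r q1AK q2B; have /FrE [[q1_ultra _] _ _] := q_r.
have q1A : q.1 A by apply: (ultraS q1_ultra _ q1AK) => a [].
have q1K : q.1 [set a | `|Kw u a - hker p| < eps / 2] by apply: (ultraS q1_ultra _ q1AK) => a [].
have hq := hker_ulim q1_ultra (same_u q q_r q1A q2B).
have lo : hker p - eps / 2 <= hker q.
  apply: (ulim_to_ge q1_ultra _ hq); apply: (ultraS q1_ultra _ q1K) => a /=.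
  by rewrite ltr_distl => /andP[+ _]; apply: ltW.
have hi : hker q <= hker p + eps / 2.
  apply: (ulim_to_le q1_ultra _ hq); apply: (ultraS q1_ultra _ q1K) => a /=.
  by rewrite ltr_distl => /andP[_]; apply: ltW.
by apply: epsO; rewrite ltr_distl; apply/andP; split; lra.
Qed.

Lemma hker_continuous : Ginf_continuous adj hker.
Proof.
move=> O O_open; split; first by move=> p [].
move=> r; split; first by move=> p [].
move=> p [[Gp Op] p_r]; have [A [B [p1A p2B ABO]]] := hker_continuous_Fr O_open p_r Op.
exists A, B; split => // q q_r q1A q2B; split => //; split; last exact: ABO.
by exists r.
Qed.

Lemma rhom_large (M : RR) : exists R : nat, forall k : nat, (R <= k)%N -> M < rhom k%:R.
Proof.
case: rhom_to_infty => _ _ /(_ (M + 1)) [T rhomT].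
exists (Num.Def.archi_bound `|T|) => k le_Rk.
apply: (@lt_le_trans _ _ (M + 1)); first lra; apply: rhomT.
apply: le_trans (ler_norm T) _; apply/ltW/(lt_le_trans (archi_boundP (normr_ge0 T))).
by rewrite ler_nat.
Qed.

Lemma hker_lt_word (M : RR) (R : nat) : (forall k : nat, (R <= k)%N -> M < rhom k%:R) ->
  forall p, Ginf adj p -> hker p < M -> exists t : R.-tuple 'I_d.+1, p.2 = push (map val t) p.1.
Proof.
move=> rhomR p Gp hpM; have [[p1_ultra _] _ [u p2u]] := Ginf_push Gp.
have near_u : p.1 [set a : X | (gdist (@adj (tag a)) (tagged a) (followV u a) < R)%N].
  apply: contrapT => /(ultra_setC p1_ultra _) far_u.
  suff : M <= hker p by lra.
  apply: (ulim_to_ge p1_ultra _ (hker_ulim p1_ultra p2u)).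
  apply: (ultraS p1_ultra _ far_u) => a /= /negP; rewrite -leqNgt => /rhomR lt_M.
  exact/ltW/(lt_le_trans lt_M)/(K_bounds _ _).1.
have : p.1 (fun a : X => exists t : R.-tuple 'I_d.+1,
                          [set a | followV (map val t) a = followV u a] a).
  apply: (ultraS p1_ultra _ near_u) => a /= /ltnW.
  by case/(follow_tuple (@adj_regular _) (@adj_connect _)) => t ft; exists t.
by case/(ultra_exists p1_ultra) => t agree_t; exists t; rewrite p2u; apply/esym/push_agree.
Qed.

Lemma Ginf_cover_word (C : set RR) (R : nat) (t : R.-tuple 'I_d.+1)
    (I : Type) (U : I -> set (pt V)) :
  closed C -> (forall i, Ginf_open adj (U i)) ->
  Ginf adj `&` hker @^-1` C `<=` \bigcup_(i in [set: I]) U i ->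
  exists s : seq I, forall om, (Ginf adj `&` hker @^-1` C) (om, push (map val t) om) ->
    exists i, List.In i s /\ U i (om, push (map val t) om).
Proof.
(* The om with (om, push w om) in h^-1 C form a closed, hence compact, set of ultrafilters. *)
move=> C_closed U_open U_cover; set w := map val t.
pose S om := (Ginf adj `&` hker @^-1` C) (om, push w om).
have S_free om : S om -> free_ultra om by case=> /Ginf_push [].
have S_Fr om : S om -> Fr adj R (om, push w om).
  by move/S_free/(Fr_push w); rewrite size_map size_tuple.
have nbhd (q : {om | S om}) : exists iAB : I * set X * set X,
    [/\ sval q iAB.1.2, push w (sval q) iAB.2 &
        forall q', Fr adj R q' -> q'.1 iAB.1.2 -> q'.2 iAB.2 -> U iAB.1.1 q'].
  case: q => om Som /=; have [i _ Ui] := U_cover _ Som.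
  have [A [B [omA omB AB_U]]] := ((U_open i).2 R).2 _ (conj Ui (S_Fr om Som)).
  by exists (i, A, B); split => // q' q'_r q'A q'B; case: (AB_U q' q'_r q'A q'B).
have [g gP] := choice nbhd.
pose D q := (g q).1.2 `&` followX w @^-1` (g q).2.
have S_closed G : is_ultra G -> (forall A, G A -> exists om, S om /\ om A) -> S G.
  move=> G_ultra G_S; have G_free : free_ultra G.
    by split => // a /G_S [om [/S_free [_ om_free] /om_free]].
  have G_r := Fr_push w G_free; rewrite size_map size_tuple in G_r.
  split; first by exists R.
  apply: contrapT => hG_C.
  have [A [B [GA GB AB_C]]] := hker_continuous_Fr (closed_openC C_closed) G_r hG_C.
  have [om [Som omAB]] := G_S _ (ultraI G_ultra GA GB); have om_ultra := (S_free _ Som).1.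
  apply: (AB_C _ (S_Fr om Som) (ultraS om_ultra (@subIsetl _ _ _) omAB)); last by case: Som.
  exact: (ultraS om_ultra (@subIsetr _ _ _) omAB).
have S_cover om : S om -> exists q, om (D q).
  move=> Som; exists (exist S om Som); case: (gP (exist S om Som)) => omA omB _.
  exact: (ultraI (S_free _ Som).1).
have [s sP] := ultra_finite_subcover (fun om Som => (S_free om Som).1) S_closed S_cover.
exists (List.map (fun q => (g q).1.1) s) => om Som; have [q [qs omD]] := sP om Som.
have om_ultra := (S_free _ Som).1.
exists (g q).1.1; split; first exact: List.in_map.
case: (gP q) => _ _; apply; first exact: S_Fr.
- exact: (ultraS om_ultra (@subIsetl _ _ _) omD).
- exact: (ultraS om_ultra (@subIsetr _ _ _) omD).
Qed.

Lemma hker_proper : Ginf_proper adj hker.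
Proof.
move=> C C_compact; split; first by move=> p [].
move=> I U U_open U_cover.
have [M CM] : exists M : RR, forall x, C x -> x <= M.
  have [M0 [_ C_bnd]] := @compact_bounded RR RR^o C C_compact.
  exists (M0 + 1) => x Cx; apply: le_trans (ler_norm x) _.
  exact: (C_bnd (M0 + 1) ltac:(lra) x Cx).
have C_closed : closed C by apply: compact_closed => //; apply: (@norm_hausdorff _ RR^o).
have [R rhomR] := rhom_large (M + 1).
have [f fP] := choice (fun t : R.-tuple 'I_d.+1 => Ginf_cover_word t C_closed U_open U_cover).
exists (List.flat_map f (enum {: R.-tuple 'I_d.+1})) => p [Gp Chp].
have [t p2t] := hker_lt_word rhomR Gp ltac:(by have := CM _ Chp; lra).
have [i [it Ui]] : exists i, List.In i (f t) /\ U i (p.1, push (map val t) p.1).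
  by apply: fP; rewrite -p2t -surjective_pairing.
exists i; last by rewrite [p]surjective_pairing p2t.
apply List.in_flat_map; exists t; split; last exact: it.
have : t \in enum {: R.-tuple 'I_d.+1} by rewrite mem_enum.
by elim: (enum _) => //= t' s IH; rewrite inE => /orP[/eqP->|/IH]; [left|right].
Qed.

Lemma hker_ulim_push w u1 u2 : is_ultra w -> Ginf adj (push u1 w, push u2 w) ->
  ulim_to w (fun a => K (followV u1 a) (followV u2 a)) (hker (push u1 w, push u2 w)).
Proof.
move=> w_ultra G12; have [/= [w1_ultra _] _ [v u2v]] := Ginf_push G12.
have agree12 : agree w (u1 ++ v) u2 by apply: agree_push; rewrite // push_cat -u2v.
move=> eps /(hker_ulim (p := (push u1 w, push u2 w)) w1_ultra u2v) /= near_h.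
apply: (ultraS w_ultra _ (ultraI w_ultra agree12 near_h)) => a /= [].
by rewrite /Kw /followV /= follow_cat => <-.
Qed.

Variable Rn : nat -> RR.
Hypothesis Rn_to_infty : forall M : RR, exists N, forall n, (N <= n)%N -> M <= Rn n.
Hypothesis K_cnd : forall n m (x : 'I_m -> V n) (z : 'I_m -> complex RR),
  injective x -> (forall i j, (gdist (@adj n) (x i) (x j))%:R <= Rn n) ->
  \sum_(i < m) z i = 0 -> cform z (fun i j => K (x i) (x j)) <= 0.

Lemma hker_cnd m (om : 'I_m -> set_system X) (z : 'I_m -> complex RR) :
  injective om -> (forall i, free_ultra (om i)) -> (forall i j, Ginf adj (om i, om j)) ->
  \sum_(i < m) z i = 0 -> cform z (fun i j => hker (om i, om j)) <= 0.
Proof.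
case: m om z => [|m] om z om_inj om_free om_Ginf z_sum0; first by rewrite /cform big_ord0.
set w := om ord0; have [w_ultra _] := om_free ord0.
have om_word i : exists u, om i = push u w by case: (Ginf_push (om_Ginf ord0 i)).
have [u om_u] := choice om_word.
rewrite cform_le0E; last by move=> i j; apply: hker_sym.
apply: form_le0_approx => eps eps_gt0.
have [N RnN] := Rn_to_infty (\max_(i < m.+1) size (u i) + \max_(i < m.+1) size (u i))%N%:R.
have w_far := free_ultra_tag_ge N (om_free ord0).
have w_sep : w (fun a => forall ij : 'I_m.+1 * 'I_m.+1,
    ij.1 != ij.2 -> followV (u ij.1) a != followV (u ij.2) a).
  apply: (ultra_forall w_ultra) => -[i j] /=; have [<-|ij] := eqVneq i j.
    by apply: (ultraS w_ultra _ (ultraT w_ultra)) => a _; rewrite eqxx.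
  apply: contrapT => /(ultra_setC w_ultra _) w_eq; move/eqP: ij; apply; apply: om_inj.
  rewrite !om_u; apply: push_agree => //; apply: (ultraS w_ultra _ w_eq) => a /= nij.
  by apply: contrapT => /eqP nij'; apply: nij => _.
have w_close : w (fun a => forall ij : 'I_m.+1 * 'I_m.+1,
    `|K (followV (u ij.1) a) (followV (u ij.2) a) - hker (om ij.1, om ij.2)| < eps).
  apply: (ultra_forall w_ultra) => -[i j] /=.
  by have := @hker_ulim_push w (u i) (u j) w_ultra; rewrite -!om_u => /(_ (om_Ginf i j)); apply.
have [a [[/= a_far a_sep] a_close]] :=
  ultra_inhabited w_ultra (ultraI w_ultra (ultraI w_ultra w_far w_sep) w_close).
exists (fun i j => K (followV (u i) a) (followV (u j) a)) => [i j|]; first exact: (a_close (i, j)).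
rewrite -cform_le0E; last by move=> i j; rewrite (K_ge0_sym _ _).2.
apply: K_cnd z_sum0.
- move=> i j /eqP; apply: contraTeq => ij; exact: (a_sep (i, j)).
- move=> i j; apply: le_trans (RnN _ a_far); rewrite ler_nat.
  apply: leq_trans (gdist_follow2 (@adj_sym _) (@adj_connect _) _ _ _) _.
  by apply: leq_add; apply: leq_bigmax.
Qed.

Lemma hker_boundary_haagerup : boundary_haagerup adj.
Proof.
exists hker; split; first exact: hker_ge0.
split; first exact: hker_continuous.
split; first exact: hker_proper.
split; first by move=> om /boundaryE; apply: hker_diag.
split; first by move=> om1 om2; apply: hker_sym.
by move=> m om z om_inj /(_ _)/boundaryE om_free; apply: hker_cnd.
Qed.

End Kernel.

End CoarseSpace.

Theorem lemma5p3 (V : nat -> finType) (adj : forall n, rel (V n)) (d : nat) :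
  (3 <= d)%N ->
  (forall n, [/\ simple_graph (adj n), connected_graph (adj n)
                & regular_graph (adj n) d]) ->
  asymp_embeddable adj ->
  boundary_haagerup adj.
Proof.
move=> _ G_simple_conn_reg [rhom [rhop [K [Rn [rhom_infty [rhop_infty [_ [Rn_infty
  [K_ge0_sym [K_diag [K_bounds K_cnd]]]]]]]]]]].
have adj_sym n : symmetric (@adj n) by case: (G_simple_conn_reg n) => [[]].
have adj_connect n : forall x y : V n, connect (@adj n) x y by case: (G_simple_conn_reg n) => _ [].
have adj_regular n : forall x : V n, #|[set y | adj n x y]| = d by case: (G_simple_conn_reg n).
exact: (hker_boundary_haagerup adj_sym adj_connect adj_regular rhom_infty rhop_infty
  K_ge0_sym K_diag K_bounds Rn_infty K_cnd).
Qed.
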